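(* Consider the linear mixture $\textsc{lin}$ with parameter space the unit simplex $\mathcal{S}=\{\mathbf{w}\in\mathbb{R}^m:\mathbf{w}\ge0,\ \sum_iw_i=1\}$. Then for every probability matrix $\mathbf{P}$ over $\mathcal{P}_+$ and every $x\in\mathcal{X}$, the function $\mathbf{w}\mapsto\ell(x,\textsc{lin}(\mathbf{w},\mathbf{P}))$ is convex and differentiable on $\mathcal{S}$, and for all $\mathbf{w}\in\mathcal{S}$ $$\lvert\nabla_{\mathbf{w}}\ell(x,\textsc{lin}(\mathbf{w},\mathbf{P}))\rvert^2\le a\,\ell(x,\textsc{lin}(\mathbf{w},\mathbf{P}))$$ for every $a\ge m\log_2^2(e)\,\frac{p_{\max}(\mathbf{P})^2}{p_{\min}(\mathbf{P})^2\log_2(1/p_{\min}(\mathbf{P}))}$. In particular $\textsc{lin}$ satisfies the properties of a nice mixture, with the constant in the gradient condition given by this bound.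
   Context: $\mathcal{X}=\{1,\dots,N\}$, $1<N<\infty$; $\mathcal{P}_+$ is the set of distributions on $\mathcal{X}$ with positive probability on each letter; $m>1$. A probability matrix over $\mathcal{P}_+$ is $\mathbf{P}=(\mathbf{p}(1)\cdots\mathbf{p}(N))$ with $\mathbf{p}(x)=(p_1(x),\dots,p_m(x))^{\mathsf T}$, $p_i\in\mathcal{P}_+$. $p_{\max}(\mathbf{P}):=\max_{x}\max_{i}p_i(x)$, $p_{\min}(\mathbf{P}):=\min_{x}\min_{i}p_i(x)$. $\ell(x,p):=-\log_2p(x)$. The linear mixture is $\textsc{lin}(x;\mathbf{w},\mathbf{P}):=\mathbf{w}^{\mathsf T}\mathbf{p}(x)$ for $\mathbf{w}\in\mathcal{S}$. A mixture with parameter space $\mathcal{W}$ is nice if $\mathcal{W}$ is non-empty, compact, convex, $\mathbf{w}\mapsto\ell(x,\textsc{mix}(\mathbf{w},\mathbf{P}))$ is convex and differentiable on $\mathcal{W}$ for all $\mathbf{P},x$, and there is $a>0$ with $\lvert\nabla_{\mathbf{w}}\ell(x,\textsc{mix}(\mathbf{w},\mathbf{P}))\rvert^2\le a\,\ell(x,\textsc{mix}(\mathbf{w},\mathbf{P}))$ for all $\mathbf{w},\mathbf{P},x$. *)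

From HB Require Import structures.
From mathcomp Require Import all_boot all_order all_algebra.
From mathcomp Require Import all_classical all_reals all_analysis.
Set Implicit Arguments. Unset Strict Implicit. Unset Printing Implicit Defensive.
Import Order.TTheory GRing.Theory Num.Theory.
Import numFieldNormedType.Exports.
Local Open Scope ring_scope.
Local Open Scope classical_set_scope.

(* A probability matrix P over P_+ : m rows (experts) i, N columns (letters) x;
   entry P i x = p_i(x).  Each row p_i is a distribution with full support. *)
Definition prob_matrix_pos (R : realType) (m N : nat) (P : 'M[R]_(m, N)) : Prop :=
  (forall i x, 0 < P i x) /\ (forall i, \sum_(x < N) P i x = 1).

(* p_max and p_min of P (entries lie in (0,1], so the neutral elements 0 / 1
   do not affect the value). *)
Definition pmax (R : realType) (m N : nat) (P : 'M[R]_(m, N)) : R :=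
  \big[Num.max/0]_(i < m) \big[Num.max/0]_(x < N) P i x.
Definition pmin (R : realType) (m N : nat) (P : 'M[R]_(m, N)) : R :=
  \big[Num.min/1]_(i < m) \big[Num.min/1]_(x < N) P i x.

Definition log2 (R : realType) (y : R) : R := ln y / ln 2.

Definition codelen (R : realType) (q : R) : R := - log2 q.

Definition simplex (R : realType) (m : nat) : set 'rV[R]_m :=
  [set w | (forall i, 0 <= w ord0 i) /\ \sum_(i < m) w ord0 i = 1].

Definition lin (R : realType) (m N : nat) (w : 'rV[R]_m) (P : 'M[R]_(m, N))
  (x : 'I_N) : R := \sum_(i < m) w ord0 i * P i x.

Definition lin_loss (R : realType) (m N : nat) (P : 'M[R]_(m, N)) (x : 'I_N)
  : 'rV[R]_m -> R := fun w => codelen (lin w P x).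

(* squared Euclidean norm of the gradient of f at w (components are the
   differential applied to the standard basis vectors) *)
Definition grad_norm2 (R : realType) (m : nat) (f : 'rV[R]_m -> R)
  (w : 'rV[R]_m) : R :=
  \sum_(i < m) ('d f w (delta_mx ord0 i : 'rV[R]_m)) ^+ 2.

(* The loss is [-log2] of the linear form [w |-> w . p(x)], so it is convex
   (concavity of [ln]) and its gradient is [-p(x) / (ln 2 * l)] with
   [l = w . p(x)], of squared norm at most [m pmax^2 / (ln 2 * l)^2].
   On the simplex, [l] is a convex combination of the [p_i(x)], which all lie
   in [[pmin, 1 - pmin]] because each row has at least two positive entries.
   The bound then reduces to [pmin^2 ln pmin <= l^2 ln l] (both sides
   negative), i.e. to the fact that [t^2 ln t] on [[p, 1 - p]] is largest at
   [t = p]: it decreases up to [t = e^(-1/2)] and increases afterwards, and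
   the endpoint comparison [(1 - p)^2 ln (1 - p) <= p^2 ln p] for [p <= 1/2]
   is checked with elementary bounds on [ln]. *)
From HB Require Import structures.
From mathcomp Require Import all_boot all_order all_algebra.
From mathcomp Require Import all_classical all_reals all_analysis.
From mathcomp Require Import ring lra.
Set Implicit Arguments.
Unset Strict Implicit.
Import Order.TTheory GRing.Theory Num.Theory.
Import numFieldNormedType.Exports.
Local Open Scope ring_scope.
Local Open Scope classical_set_scope.

Lemma codelen_is_derive {R : realType} {y : R} : 0 < y ->
  is_derive y 1 (@codelen R) (- ((ln 2)^-1 *: y^-1)).
Proof.
move=> y_gt0.
have -> : @codelen R = - ((ln 2)^-1 *: (@ln R)).
  by apply/funext => q; rewrite /codelen /log2 /= mulrC.
by apply: is_deriveN; apply: is_deriveZ; exact: is_derive1_ln.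
Qed.

Section LinearForm.
Variables (R : realType) (m N : nat) (P : 'M[R]_(m, N)) (x : 'I_N).

Definition lin_at (w : 'rV[R]_m) : R := lin w P x.

Lemma lin_at_is_linear : linear lin_at.
Proof.
move=> a u v; rewrite /lin_at /lin /= scaler_sumr -big_split /=.
by apply: eq_bigr => i _; rewrite !mxE mulrDl -mulrA.
Qed.

HB.instance Definition _ := GRing.isLinear.Build R _ _ _ lin_at lin_at_is_linear.

Lemma continuous_lin_at : continuous lin_at.
Proof.
apply: (@continuous_big _ _ +%R 0 xpredT) => //; first exact: add_continuous.
move=> i _ w.
apply: (continuousM (s := fun v : 'rV[R]_m => v ord0 i) (t := cst (P i x))).
  exact: coord_continuous.
exact: cst_continuous.
Qed.

Lemma lin_at_delta i : lin_at (delta_mx ord0 i) = P i x.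
Proof.
rewrite /lin_at /lin (bigD1 i) //= big1 ?addr0; first by rewrite mxE !eqxx mul1r.
by move=> j ji; rewrite mxE eqxx /= (negbTE ji) mul0r.
Qed.

Lemma lin_at_simplex_bounds (lo hi : R) (w : 'rV[R]_m) :
  simplex w -> (forall i, lo <= P i x <= hi) -> lo <= lin_at w <= hi.
Proof.
move=> [w_ge0 w_sum1] P_bounds.
have centered (c : R) : lin_at w - c = \sum_(i < m) w ord0 i * (P i x - c).
  rewrite /lin_at /lin -[c in LHS]mul1r -w_sum1 mulr_suml -sumrB.
  by apply: eq_bigr => i _; rewrite mulrBr.
apply/andP; split; rewrite -subr_ge0.
  rewrite centered; apply: sumr_ge0 => i _; rewrite mulr_ge0 // subr_ge0.
  by case/andP: (P_bounds i).
rewrite -opprB centered -sumrN; apply: sumr_ge0 => i _.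
rewrite -mulrN mulr_ge0 // oppr_ge0 subr_le0.
by case/andP: (P_bounds i).
Qed.

Lemma lin_loss_differentiable (w : 'rV[R]_m) : 0 < lin_at w ->
  differentiable (lin_loss P x) w.
Proof.
move=> l_gt0; apply: (@differentiable_comp _ _ _ _ lin_at (@codelen R)).
  by apply: linear_differentiable; exact: continuous_lin_at.
by apply/derivable1_diffP; have [] := codelen_is_derive l_gt0.
Qed.

Lemma diff_lin_loss (w v : 'rV[R]_m) : 0 < lin_at w ->
  'd (lin_loss P x) w v = - (lin_at v / (ln 2 * lin_at w)).
Proof.
move=> l_gt0.
have lin_at_diff : differentiable lin_at w.
  by apply: linear_differentiable; exact: continuous_lin_at.
have diff_codelen : differentiable (@codelen R) (lin_at w).
  by apply/derivable1_diffP; have [] := codelen_is_derive l_gt0.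
have -> : lin_loss P x = @codelen R \o lin_at by [].
rewrite diff_comp // /= diff_lin; last exact: continuous_lin_at.
rewrite diff1E // derive1E.
have D := codelen_is_derive l_gt0.
by rewrite derive_val /= invfM scalerN.
Qed.

Lemma grad_norm2_lin_loss (w : 'rV[R]_m) : 0 < lin_at w ->
  grad_norm2 (lin_loss P x) w = \sum_(i < m) (P i x / (ln 2 * lin_at w)) ^+ 2.
Proof.
move=> l_gt0; apply: eq_bigr => i _.
by rewrite diff_lin_loss // lin_at_delta sqrrN.
Qed.

Local Open Scope convex_scope.
Lemma lin_loss_convex : (forall w, simplex w -> 0 < lin_at w) ->
  convex_function (@simplex R m) (lin_loss P x).
Proof.
move=> l_gt0 t u v /set_mem uS /set_mem vS.
have lin_conv : lin_at (u <| t |> v) = (lin_at u : R^o) <| t |> (lin_at v : R^o).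
  have -> : u <| t |> v = t%:inum *: u + (1 - t%:inum) *: v by [].
  by rewrite linearD !linearZ /= convRE.
have ln2_gt0 : 0 < ln (2 : R) by rewrite ln_gt0 // ltr1n.
have := concave_ln t (l_gt0 _ uS) (l_gt0 _ vS).
rewrite /lin_loss -/(lin_at (u <| t |> v)) lin_conv /codelen /log2 !convRE.
rewrite -/(lin_at u) -/(lin_at v) => ln_concave.
by rewrite !mulrN -opprD lerN2 !mulrA -mulrDl ler_wpM2r // invr_ge0 ltW.
Qed.
Local Close Scope convex_scope.

End LinearForm.

Section SquareTimesLog.
Variable R : realType.

Lemma ln_le_sub1 {y : R} : 0 < y -> ln y <= y - 1.
Proof.
move=> y_gt0; have := @le_ln1Dx R (y - 1).
by rewrite addrCA subrr addr0; apply; lra.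
Qed.

Lemma subr1V_le_ln {y : R} : 0 < y -> 1 - y^-1 <= ln y.
Proof.
move=> y_gt0; have := @ln_le_sub1 y^-1 ltac:(by rewrite invr_gt0).
by rewrite lnV ?posrE //; lra.
Qed.

(* [ln 2 ~ 0.693], [ln 3 ~ 1.099]: splitting into factors near [1] makes the
   tangent bounds above sharp enough. *)
Lemma ln2_ge : 37/60 <= ln (2 : R).
Proof.
have -> : (2 : R) = 5/4 * (4/3) * (6/5) by field.
rewrite lnM ?posrE ?mulr_gt0 // lnM ?posrE //.
have := @subr1V_le_ln (5/4) ltac:(lra).
have := @subr1V_le_ln (4/3) ltac:(lra).
have := @subr1V_le_ln (6/5) ltac:(lra).
have -> : (5/4 : R)^-1 = 4/5 by field.
have -> : (4/3 : R)^-1 = 3/4 by field.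
have -> : (6/5 : R)^-1 = 5/6 by field.
lra.
Qed.

Lemma ln3_le : ln (3 : R) <= 4/3.
Proof.
have -> : (3 : R) = 3/2 * (4/3) * (3/2) by field.
rewrite lnM ?posrE ?mulr_gt0 // lnM ?posrE //.
have := @ln_le_sub1 (3/2) ltac:(lra).
have := @ln_le_sub1 (4/3) ltac:(lra).
lra.
Qed.

Lemma mul_ln_ge (k p : R) : 0 < k -> 0 < p ->
  p - 1 / k - p * ln k <= p * ln p.
Proof.
move=> k_gt0 p_gt0.
have := ler_wpM2l (ltW p_gt0) (@subr1V_le_ln (k * p) (mulr_gt0 k_gt0 p_gt0)).
have -> : p * (1 - (k * p)^-1) = p - 1 / k by field; lra.
by rewrite lnM ?posrE // mulrDr; lra.
Qed.

Lemma sqr_mul_ln_1sub_le (p : R) : 0 < p -> p <= 1/2 ->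
  (1 - p) ^+ 2 * ln (1 - p) <= p ^+ 2 * ln p.
Proof.
move=> p_gt0 p_le_half.
have q_gt0 : 0 < 1 - p by lra.
have [p_le_third|p_gt_third] := lerP p (1/3).
  have lnq := ln_le_sub1 q_gt0.
  have plnp := @mul_ln_ge 3 p ltac:(lra) p_gt0.
  have pln3 : p * ln 3 <= p * (4/3) := ler_wpM2l (ltW p_gt0) ln3_le.
  have h1 : (1 - p) ^+ 2 * ln (1 - p) <= (1 - p) ^+ 2 * - p.
    by apply: ler_wpM2l; [exact: sqr_ge0 | lra].
  have h2 : p * (p - 1/3 - p * ln 3) <= p * (p * ln p).
    by apply: ler_wpM2l; lra.
  have h3 : p * (p * ln 3) <= p * (p * (4/3)) by apply: ler_wpM2l => //; lra.
  have h4 : 0 <= p * ((1 - p) ^+ 2 - (p + 1)/3) by apply: mulr_ge0; nra.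
  nra.
have lnq := @ln_le_sub1 (2 * (1 - p)) ltac:(lra).
rewrite lnM ?posrE in lnq; [|lra|lra].
have plnp := @mul_ln_ge 2 p ltac:(lra) p_gt0.
have ln2 := ln2_ge.
have h1 : (1 - p) ^+ 2 * ln (1 - p) <= (1 - p) ^+ 2 * (2 * (1 - p) - 1 - ln 2).
  by apply: ler_wpM2l; [exact: sqr_ge0 | lra].
have h2 : p * (p - 1/2 - p * ln 2) <= p * (p * ln p) by apply: ler_wpM2l; lra.
have h3 : 0 <= (1 - 2 * p) * (ln 2 - 37/60) by apply: mulr_ge0; lra.
have h4 : 0 <= (p - 1/3) * (7/6 - p) by apply: mulr_ge0; lra.
nra.
Qed.

(* [t^2 ln t] decreases up to [e^(-1/2)] and increases afterwards: compare
   [t] with [p] when [ln t <= -1/2], and with [1 - p] otherwise. *)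
Lemma sqr_mul_ln_le (p t : R) : 0 < p -> p <= t -> t <= 1 - p ->
  t ^+ 2 * ln t <= p ^+ 2 * ln p.
Proof.
move=> p_gt0 p_le_t t_le_q.
have t_gt0 : 0 < t by lra.
have ln_ratio (s : R) : 0 < s -> s * (ln t - ln s) <= t - s.
  move=> s_gt0; have := ln_le_sub1 (divr_gt0 t_gt0 s_gt0).
  rewrite ln_div ?posrE // => h.
  have := ler_wpM2l (ltW s_gt0) h.
  by have -> : s * (t / s - 1) = t - s by field; lra.
have [lnt_le|lnt_gt] := lerP (ln t) (-(1/2)).
  have h1 := ln_ratio p p_gt0.
  have h2 : p * (p * (ln t - ln p)) <= p * (t - p) by apply: ler_wpM2l => //; lra.
  have h3 : (t ^+ 2 - p ^+ 2) * ln t <= (t ^+ 2 - p ^+ 2) * (-(1/2)).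
    by apply: ler_wpM2l => //; nra.
  nra.
have q_gt0 : 0 < 1 - p by lra.
have h1 := ln_ratio (1 - p) q_gt0.
have h2 : (1 - p) * ((1 - p) * (ln t - ln (1 - p))) <= (1 - p) * (t - (1 - p)).
  by apply: ler_wpM2l => //; lra.
have h3 : ((1 - p) ^+ 2 - t ^+ 2) * (-(1/2)) <= ((1 - p) ^+ 2 - t ^+ 2) * ln t.
  by apply: ler_wpM2l; [nra | lra].
have := @sqr_mul_ln_1sub_le p p_gt0 ltac:(lra).
nra.
Qed.

End SquareTimesLog.

Section ProbabilityMatrix.
Variables (R : realType) (m N : nat) (P : 'M[R]_(m, N)).

Lemma pmin_le i x : pmin P <= P i x.
Proof.
rewrite /pmin (bigD1 i) //= ge_min; apply/orP; left.
by rewrite (bigD1 x) //= ge_min lexx.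
Qed.

Lemma pmax_ge i x : P i x <= pmax P.
Proof.
rewrite /pmax (bigD1 i) //= le_max; apply/orP; left.
by rewrite (bigD1 x) //= le_max lexx.
Qed.

Lemma pmin_gt0 : (forall i x, 0 < P i x) -> 0 < pmin P.
Proof.
have min_gt0 (a b : R) : 0 < a -> 0 < b -> 0 < Num.min a b.
  by move=> a_gt0 b_gt0; rewrite lt_min a_gt0 b_gt0.
move=> P_gt0; apply: (big_ind (fun y => 0 < y)) => // i _.
by apply: (big_ind (fun y => 0 < y)).
Qed.

Lemma le_1subr_pmin : (1 < N)%N -> prob_matrix_pos P ->
  forall i x, P i x <= 1 - pmin P.
Proof.
move=> N_gt1 [P_gt0 P_sum1] i x.
have [y y_neq_x] : exists y : 'I_N, y != x.
  have [x0|] := eqVneq x (Ordinal (ltnW N_gt1)).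
    by exists (Ordinal N_gt1); rewrite x0.
  by exists (Ordinal (ltnW N_gt1)); rewrite eq_sym.
have := P_sum1 i; rewrite (bigD1 x) //= (bigD1 y) //=.
have : 0 <= \sum_(j < N | (j != x) && (j != y)) P i j.
  by apply: sumr_ge0 => j _; exact: ltW.
by have := pmin_le i y; lra.
Qed.

End ProbabilityMatrix.

Lemma grad_norm2_lin_loss_le (R : realType) (m N : nat) (P : 'M[R]_(m, N))
    (x : 'I_N) (p M : R) (w : 'rV[R]_m) :
  (0 < m)%N -> 0 < p -> (forall i, p <= P i x <= 1 - p) ->
  (forall i, P i x <= M) -> simplex w ->
  grad_norm2 (lin_loss P x) w <=
    m%:R * log2 (expR 1) ^+ 2 * M ^+ 2 / (p ^+ 2 * log2 p^-1) * lin_loss P x w.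
Proof.
move=> m_gt0 p_gt0 P_bounds P_le_M wS.
have /andP[p_le_l l_le_q] := lin_at_simplex_bounds wS P_bounds.
set l := lin_at P x w in p_le_l l_le_q.
have l_gt0 : 0 < l by lra.
have ln2_gt0 : 0 < ln (2 : R) by rewrite ln_gt0 // ltr1n.
have /andP[p_le_Pi0 Pi0_le_q] := P_bounds (Ordinal m_gt0).
have lnp_lt0 : ln p < 0 by apply: ln_lt0; rewrite p_gt0 /=; lra.
have M_ge0 : 0 <= M by have := P_le_M (Ordinal m_gt0); lra.
have grad_le : grad_norm2 (lin_loss P x) w <= m%:R * (M / (ln 2 * l)) ^+ 2.
  rewrite grad_norm2_lin_loss // -/l mulr_natl -[in X in _ <= X](card_ord m).
  rewrite -sumr_const.
  apply: ler_sum => i _; have /andP[p_le_Pi _] := P_bounds i.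
  have lnl_gt0 : 0 < ln 2 * l by rewrite mulr_gt0.
  rewrite ler_sqr ?nnegrE ?divr_ge0 ?ler_pM2r ?invr_gt0 ?(ltW lnl_gt0) //.
  exact: le_trans (ltW p_gt0) p_le_Pi.
apply: (le_trans grad_le).
have -> : m%:R * log2 (expR 1) ^+ 2 * M ^+ 2 / (p ^+ 2 * log2 p^-1)
          * lin_loss P x w
        = m%:R * (M / (ln 2 * l)) ^+ 2 * (l ^+ 2 * - ln l / (p ^+ 2 * - ln p)).
  rewrite /lin_loss /codelen /log2 expRK lnV ?posrE // -/l.
  by field; rewrite (lt_eqF lnp_lt0) (gt_eqF p_gt0) (gt_eqF l_gt0) (gt_eqF ln2_gt0).
apply: ler_peMr; first by rewrite mulr_ge0 ?sqr_ge0.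
rewrite ler_pdivlMr ?mul1r; last by rewrite mulr_gt0 ?exprn_gt0 ?oppr_gt0.
by rewrite !mulrN lerN2 sqr_mul_ln_le.
Qed.

Theorem lemma2 (R : realType) (m N : nat) (hN : (1 < N)%N) (hm : (1 < m)%N)
  (P : 'M[R]_(m, N)) (hP : prob_matrix_pos P) (x : 'I_N) :
  convex_function (@simplex R m) (lin_loss P x) /\
  (forall w, @simplex R m w -> differentiable (lin_loss P x) w) /\
  (forall a : R,
     m%:R * (log2 (expR 1)) ^+ 2 * (pmax P ^+ 2)
       / (pmin P ^+ 2 * log2 (pmin P)^-1) <= a ->
     forall w, @simplex R m w ->
       grad_norm2 (lin_loss P x) w <= a * lin_loss P x w).
Proof.
have pmin_pos : 0 < pmin P by apply: pmin_gt0; case: hP.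
have P_bounds i : pmin P <= P i x <= 1 - pmin P.
  by rewrite pmin_le le_1subr_pmin.
have l_gt0 w : simplex w -> 0 < lin_at P x w.
  move=> wS; apply: lt_le_trans pmin_pos _.
  by case/andP: (lin_at_simplex_bounds wS P_bounds).
split; first exact: lin_loss_convex.
split; first by move=> w wS; exact/lin_loss_differentiable/l_gt0.
move=> a a_ge w wS.
have loss_ge0 : 0 <= lin_loss P x w.
  rewrite /lin_loss /codelen /log2 oppr_ge0 pmulr_lle0 ?invr_gt0 ?ln_gt0 ?ltr1n //.
  apply: ln_le0; apply: le_trans (_ : 1 - pmin P <= 1); last by rewrite gerBl ltW.
  by case/andP: (lin_at_simplex_bounds wS P_bounds).
apply: le_trans (ler_wpM2r loss_ge0 a_ge).
apply: grad_norm2_lin_loss_le wS => // [|i]; [exact: ltnW | exact: pmax_ge].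
Qed.
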